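(* Let $\frac n5\le k<\frac n2$ and $\delta\in(0,1)$. There is a universal constant $C>0$ such that if $n$ is sufficiently large depending only on $\delta$, then $$\sup_{\theta\in\mathbb{R},\ \eta\in\mathbb{R}^n,\ \sigma>0,\ |\mathcal O|\le k}P_{\theta,\eta,\sigma}\left\{\big|\operatorname{median}(X_1,\dots,X_n)-\theta\big|>C\sigma\sqrt{\log\Big(\frac{en}{n-2k}\Big)}\right\}\le\delta .$$
   Context: Huber contamination model (deterministic version): $\{1,\dots,n\}$ is partitioned into a fixed inlier set $\mathcal I$ and a fixed outlier set $\mathcal O$ with $|\mathcal O|\le k$; the $X_j$ are independent with $X_j\sim N(\theta,\sigma^2)$ for $j\in\mathcal I$ and $X_j=\eta_j$ (a point mass at a fixed arbitrary value $\eta_j\in\mathbb{R}$) for $j\in\mathcal O$. $P_{\theta,\eta,\sigma}$ is the resulting joint law. $\operatorname{median}$ denotes the sample median (for even $n$, any point between the two middle order statistics). *)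

From HB Require Import structures.
From mathcomp Require Import all_boot all_order all_algebra.
From mathcomp Require Import all_classical all_reals all_analysis.
Set Implicit Arguments. Unset Strict Implicit. Unset Printing Implicit Defensive.
Import Order.TTheory GRing.Theory Num.Theory.
Local Open Scope classical_set_scope.
Local Open Scope ring_scope.

Definition order_stat {R : realType} (n : nat) (x : 'I_n -> R) (j : nat) : R :=
  nth 0 (sort <=%R [seq x i | i <- enum 'I_n]) j.

(* m is a sample median: lies between the two middle order statistics
   (for odd n these coincide, with 0-based indices (n-1)/2 = n/2). *)
Definition is_median {R : realType} (n : nat) (x : 'I_n -> R) (m : R) : Prop :=
  order_stat x ((n - 1) %/ 2) <= m <= order_stat x (n %/ 2).

Definition mutually_independent {R : realType} d (T : measurableType d)
  (P : probability T R) (n : nat) (X : 'I_n -> {RV P >-> R}) : Prop :=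
  forall B : 'I_n -> set R, (forall i, measurable (B i)) ->
    P [set w | forall i, B i (X i w)] = (\prod_(i < n) P (X i @^-1` B i))%E.

(* If a median of the sample is farther than c from theta, then at least ceil(n/2)
   points lie beyond theta + c (or below theta - c), hence at least
   m = ceil(n/2) - k inliers deviate from theta by more than c.  By independence
   and a union bound over the m-subsets of inliers, this has probability at most
   C(n, m) q^m, where q <= 2 exp(-c^2 / (4 sigma^2)) bounds a Gaussian tail.
   For c = 8 sigma sqrt(log(en / (n - 2k))) one gets q = 2 y^16 with
   y = (n - 2k) / (en), and C(n, m) <= (en / m)^m turns the bound into z^m with
   z <= min(1/2, m/n); such a power is small for large n, whether m is large
   (z <= 1/2) or small (z <= m/n). *)

From HB Require Import structures.
From mathcomp Require Import all_boot all_order all_algebra.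
From mathcomp Require Import all_classical all_reals all_analysis.
From mathcomp Require Import lra ring zify measurable_realfun.
Set Implicit Arguments. Unset Strict Implicit. Unset Printing Implicit Defensive.
Import Order.TTheory GRing.Theory Num.Theory.
Local Open Scope ring_scope.

Section sorted_nth.
Variable R : realDomainType.
Implicit Types (s : seq R) (a b : R).

Lemma sorted_lt_nthE s a j : sorted <=%R s -> (j < size s)%N ->
  (a < nth 0 s j) = (size s - j <= count (>%R^~ a) s)%N.
Proof.
elim: s j => [//|y s IH] j /= s_sorted j_lt.
have y_min := order_path_min (@le_trans _ R) s_sorted.
have s'_sorted : sorted <=%R s := path_sorted s_sorted.
case: (ltrP a y) => ay.
- have -> : count (>%R^~ a) s = size s.
    apply/eqP; rewrite -all_count; apply/allP => z zs.
    by apply: (lt_le_trans ay); move/allP: y_min => /(_ z zs).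
  rewrite add1n leq_subr; case: j j_lt => [|j] j_lt //=.
  by apply: (lt_le_trans ay); move/allP: y_min; apply; rewrite mem_nth.
- rewrite add0n; case: j j_lt => [|j] j_lt /=; last by rewrite subSS IH.
  by rewrite subn0 ltNge ay; apply/esym/negbTE; rewrite -ltnNge ltnS count_size.
Qed.

Lemma sorted_nth_ltE s b j : sorted <=%R s -> (j < size s)%N ->
  (nth 0 s j < b) = (j < count (<%R^~ b) s)%N.
Proof.
elim: s j => [//|y s IH] j /= s_sorted j_lt.
have y_min := order_path_min (@le_trans _ R) s_sorted.
have s'_sorted : sorted <=%R s := path_sorted s_sorted.
case: (ltrP y b) => yb.
- by rewrite add1n; case: j j_lt => [|j] j_lt //=; rewrite ltnS IH.
- have -> : count (<%R^~ b) s = 0%N.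
    apply/eqP; rewrite -leqn0 leqNgt -has_count; apply/hasPn => z zs.
    by rewrite -leNgt (le_trans yb) //; move/allP: y_min => /(_ z zs).
  rewrite ltn0; apply/negbTE; rewrite -leNgt; case: j j_lt => [|j] j_lt //=.
  by apply: (le_trans yb); move/allP: y_min; apply; rewrite mem_nth.
Qed.

End sorted_nth.

Section order_statistics.
Variables (R : realType) (n : nat) (x : 'I_n -> R).

Let sample := sort <=%R [seq x i | i <- enum 'I_n].

Let sample_sorted : sorted <=%R sample.
Proof. exact/sort_sorted/le_total. Qed.

Let size_sample : size sample = n.
Proof. by rewrite size_sort size_map size_enum_ord. Qed.

Let count_sample (p : pred R) : count p sample = #|[set i | p (x i)]|.
Proof.
have /permP -> : perm_eq sample [seq x i | i <- enum 'I_n] by rewrite perm_sort.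
by rewrite count_map -sum1_count -(sum1dep_card (fun i => p (x i))) big_enum_cond.
Qed.

Lemma order_stat_gtE j a : (j < n)%N ->
  (a < order_stat x j) = (n - j <= #|[set i | (a < x i)%R]|)%N.
Proof.
by move=> jn; rewrite /order_stat sorted_lt_nthE ?size_sample ?count_sample.
Qed.

Lemma order_stat_ltE j b : (j < n)%N ->
  (order_stat x j < b) = (j < #|[set i | (x i < b)%R]|)%N.
Proof.
by move=> jn; rewrite /order_stat sorted_nth_ltE ?size_sample ?count_sample.
Qed.

Lemma order_stat_le i j : (i <= j < n)%N -> order_stat x i <= order_stat x j.
Proof.
case/andP=> ij jn; apply: le_sorted_leq_nth => //; rewrite inE size_sample //.
exact: leq_ltn_trans jn.
Qed.

Lemma far_median_cardE (th c : R) : (0 < n)%N ->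
  (exists m, is_median x m /\ c < `|m - th|) <->
  (n - n %/ 2 <= #|[set i | (th + c < x i)%R]|)%N \/
  (n - n %/ 2 <= #|[set i | (x i < th - c)%R]|)%N.
Proof.
move=> n_gt0.
have hi_lt : (n %/ 2 < n)%N by lia.
have lo_lt : ((n - 1) %/ 2 < n)%N by lia.
have lo_le_hi : ((n - 1) %/ 2 <= n %/ 2)%N by lia.
have half_eq : (n - n %/ 2 = ((n - 1) %/ 2).+1)%N by lia.
split.
- move=> [m [/andP [lo hi]]]; rewrite ltr_normr => /orP [] far.
  + by left; rewrite -order_stat_gtE //; apply: lt_le_trans hi; lra.
  + by right; rewrite half_eq -order_stat_ltE //; apply: le_lt_trans lo _; lra.
- case=> far.
  + rewrite -order_stat_gtE // in far; exists (order_stat x (n %/ 2)).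
    rewrite /is_median lexx andbT order_stat_le ?lo_le_hi //.
    by split=> //; rewrite ltr_normr; apply/orP; left; lra.
  + rewrite half_eq -order_stat_ltE // in far; exists (order_stat x ((n - 1) %/ 2)).
    rewrite /is_median lexx order_stat_le ?lo_le_hi //.
    by split=> //; rewrite ltr_normr; apply/orP; right; lra.
Qed.

Lemma far_median_inliers_card (th c : R) k (I : {set 'I_n}) :
  (0 < n)%N -> (#|~: I| <= k)%N -> (exists m, is_median x m /\ c < `|m - th|) ->
  (n - n %/ 2 - k <= #|[set i in I | (c < `|x i - th|)%R]|)%N.
Proof.
move=> n_gt0 outliers_le /(far_median_cardE _ _ n_gt0) far.
set D := [set i | (c < `|x i - th|)%R].
suff [A AD A_ge] : exists2 A : {set 'I_n}, A \subset D & (n - n %/ 2 <= #|A|)%N.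
  apply: leq_trans (leq_sub (leq_trans A_ge (subset_leq_card AD)) outliers_le) _.
  rewrite (_ : [set i in I | _] = D :&: I); last by apply/setP => i; rewrite !inE andbC.
  rewrite -(cardsID I D) leq_subLR addnC leq_add2r.
  by rewrite subset_leq_card // finset.setDE subsetIr.
case: far => far.
- exists [set i | (th + c < x i)%R] => //.
  by apply/fintype.subsetP => i; rewrite !inE ltr_normr => far_i; apply/orP; left; lra.
- exists [set i | (x i < th - c)%R] => //.
  by apply/fintype.subsetP => i; rewrite !inE ltr_normr => far_i; apply/orP; right; lra.
Qed.

End order_statistics.

Lemma ffact_leq_expn n m : (n ^_ m <= n ^ m)%N.
Proof.
elim: m => [|m IH]; first by rewrite ffactn0 expn0.
by rewrite ffactnSr expnS mulnC leq_mul ?leq_subr.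
Qed.

Section binomial_bounds.
Variable R : realType.

Lemma expR1_ge2 : (2 : R) <= expR 1.
Proof. by have := @expR_ge1Dx R 1; lra. Qed.

Lemma natr_expn_le_expR_fact m : (m%:R : R) ^+ m <= expR 1 ^+ m * m`!%:R.
Proof.
case: m => [|m]; first by rewrite !expr0 mul1r.
have := @expR_ge1Dxn R m.+1%:R m (ler0n _ _).
rewrite -ler_pdivrMr ?ltr0n ?fact_gt0 // -expRM_natl mulr1.
lra.
Qed.

Lemma bin_le_expR n m : ('C(n, m)%:R : R) * m%:R ^+ m <= (expR 1 * n%:R) ^+ m.
Proof.
apply: le_trans (_ : 'C(n, m)%:R * (expR 1 ^+ m * m`!%:R) <= _).
  by rewrite ler_wpM2l ?natr_expn_le_expR_fact.
rewrite mulrCA exprMn ler_wpM2l ?exprn_ge0 ?expR_ge0 //.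
by rewrite -natrM -natrX ler_nat bin_ffact ffact_leq_expn.
Qed.

Lemma pow_small_eventually (delta : R) : 0 < delta ->
  exists N0 : nat, forall n m (z : R), (N0 <= n)%N -> (0 < m)%N ->
    0 <= z <= 2^-1 -> z <= m%:R / n%:R -> z ^+ m <= delta.
Proof.
move=> delta_gt0; set M := (Num.truncn delta^-1).+1.
have M_gt0 : (0 : R) < M%:R by rewrite ltr0n.
have invM_lt : (M%:R : R)^-1 < delta.
  by rewrite -[delta]invrK ltf_pV2 ?posrE ?invr_gt0 ?truncnS_gt.
exists (M * M)%N => n m z MM_le m_gt0 /andP[z_ge0 z_le] z_le_mn.
apply/ltW/le_lt_trans/invM_lt.
case: (leqP M m) => [M_le | m_lt].
  apply: le_trans (_ : 2^-1 ^+ m <= _); first by rewrite lerXn2r ?nnegrE ?invr_ge0.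
  rewrite exprVn lef_pV2 ?posrE ?exprn_gt0 // -natrX ler_nat.
  exact/ltnW/(leq_ltn_trans M_le)/ltn_expl.
  apply: le_trans (_ : z <= _).
    by rewrite -[leRHS]expr1 ler_wiXn2l // (le_trans z_le) ?invf_le1; lra.
  apply: (le_trans z_le_mn); rewrite ler_pdivrMr ?ltr0n; last by lia.
  by rewrite mulrC ler_pdivlMr // -natrM ler_nat; nia.
Qed.

Lemma bin_tail_small_eventually (delta : R) : 0 < delta ->
  exists N0 : nat, forall n m (y : R), (N0 <= n)%N -> (0 < m)%N -> (0 < n)%N -> 0 <= y ->
    expR 1 * n%:R * y <= 2 * m%:R -> expR 1 * n%:R * y <= n%:R ->
    'C(n, m)%:R * (2 * y ^+ 16) ^+ m <= delta.
Proof.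
move=> /pow_small_eventually [N0 small]; exists N0 => n m y N0_le m_gt0 n_gt0 y_ge0 eny_le eny_le_n.
have e_ge2 := expR1_ge2; set e := expR 1 in e_ge2 eny_le eny_le_n *.
have m_gt0' : (0 : R) < m%:R by rewrite ltr0n.
have n_gt0' : (0 : R) < n%:R by rewrite ltr0n.
have ny_ge0 : 0 <= n%:R * y by rewrite mulr_ge0 ?ler0n.
set z := e * n%:R / m%:R * (2 * y ^+ 16).
have y_le_half : y <= 2^-1.
  by rewrite -(ler_pM2l n_gt0'); nra.
have z_le_y : z <= y.
  have y14_le : y ^+ 14 <= 4^-1.
    apply: le_trans (_ : 2^-1 ^+ 2 <= _); last by rewrite expr2 -invfM; lra.
    apply: le_trans (_ : 2^-1 ^+ 14 <= _); first by rewrite lerXn2r ?nnegrE.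
    by rewrite ler_wiXn2l // ?invr_ge0 ?invf_le1; lra.
  have y15_le : 2 * y ^+ 15 <= y / 2 by rewrite exprS; nra.
  have eny_ge0 : 0 <= e * n%:R * y by rewrite -mulrA mulr_ge0 //; lra.
  have -> : z = e * n%:R * y * (2 * y ^+ 15) / m%:R.
    by rewrite /z exprS; field; rewrite gt_eqF.
  rewrite ler_pdivrMr //; nra.
have bin_le : 'C(n, m)%:R <= (e * n%:R / m%:R) ^+ m.
  by rewrite expr_div_n ler_pdivlMr ?exprn_gt0 ?bin_le_expR.
apply: le_trans (small n m z N0_le m_gt0 _ _).
- rewrite /z [leRHS]exprMn; apply: ler_wpM2r bin_le.
  by rewrite exprn_ge0 // mulr_ge0 // exprn_ge0.
- rewrite (le_trans z_le_y) // andbT /z mulr_ge0 ?mulr_ge0 ?exprn_ge0 //.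
  lra.
- apply: (le_trans z_le_y); rewrite ler_pdivlMr //; nra.
Qed.

End binomial_bounds.

Local Open Scope classical_set_scope.

Section normal_tail.
Variable R : realType.
Implicit Types (th s t : R).

Lemma measurable_far th t : measurable [set y : R | t < `|y - th|].
Proof.
rewrite [X in measurable X](_ : _ = setT `&` (fun y => `|y - th|) @^-1` `]t, +oo[).
  by apply: measurableT_comp => //; exact: measurable_funB.
by rewrite setTI; apply/seteqP; split => y /=; rewrite in_itv /= andbT.
Qed.

Lemma normal_pdf_far_le th s t x : 0 < s -> 0 <= t -> t < `|x - th| ->
  normal_pdf th s x <= 2 * expR (- (t ^+ 2 / s ^+ 2) / 4) * normal_pdf th (2 * s) x.
Proof.
move=> s_gt0 t_ge0 far.
rewrite !normal_pdfE ?mulf_neq0 ?gt_eqF // /normal_fun /normal_peak.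
have -> : (2 * s) ^+ 2 * pi *+ 2 = 2 ^+ 2 * (s ^+ 2 * pi *+ 2).
  by rewrite exprMn -!mulrnAr mulrA.
rewrite sqrtrM ?exprn_ge0 // sqrtr_sqr ger0_norm // [(2 * _)^-1]invfM.
set peak := (Num.sqrt (s ^+ 2 * pi *+ 2))^-1.
have peak_ge0 : 0 <= peak by rewrite invr_ge0 sqrtr_ge0.
set a := (x - th) ^+ 2 / s ^+ 2; set b := t ^+ 2 / s ^+ 2.
have s2_gt0 : 0 < s ^+ 2 by rewrite exprn_gt0.
have b_ge0 : 0 <= b by rewrite divr_ge0 ?sqr_ge0.
have ba : b <= a.
  rewrite /a /b ler_pM2r ?invr_gt0 // -[X in _ <= X]real_normK ?num_real //.
  by rewrite ler_sqr ?nnegrE // ltW.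
have -> : - (x - th) ^+ 2 / (s ^+ 2 *+ 2) = - a / 2.
  by rewrite /a -mulr_natr; field; rewrite gt_eqF.
have -> : - (x - th) ^+ 2 / ((2 * s) ^+ 2 *+ 2) = - a / 8.
  by rewrite /a -mulr_natr exprMn; field; rewrite gt_eqF.
have -> : 2 * expR (- b / 4) * (2^-1 * peak * expR (- a / 8)) =
          peak * expR (- b / 4 + - a / 8) by rewrite expRD; field.
by apply: ler_wpM2l => //; rewrite ler_expR; lra.
Qed.

Lemma normal_prob_far_le th s t : 0 < s -> 0 <= t ->
  (normal_prob th s [set y | (t < `|y - th|)%R] <= (2 * expR (- (t ^+ 2 / s ^+ 2) / 4))%:E)%E.
Proof.
move=> s_gt0 t_ge0.
set c := 2 * expR _.
have pdf_ge0 m v x : (0 <= (normal_pdf m v x)%:E)%E by rewrite lee_fin normal_pdf_ge0.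
have mpdf m v : measurable_fun [set: R] (fun x => (normal_pdf m v x)%:E).
  by apply/measurable_EFinP; exact: measurable_normal_pdf.
have mcpdf : measurable_fun [set: R] (fun x => c%:E * (normal_pdf th (2 * s) x)%:E)%E.
  by apply: emeasurable_funM => //; exact: measurable_cst.
rewrite /normal_prob.
apply: (@le_trans _ _ (\int[lebesgue_measure]_(x in [set y | (t < `|y - th|)%R])
                          (c%:E * (normal_pdf th (2 * s) x)%:E))%E).
  apply: ge0_le_integral => //.
  - exact: measurable_far.
  - exact: measurable_funS (mpdf _ _).
  - exact: measurable_funS mcpdf.
  - by move=> x /= far; rewrite -EFinM lee_fin normal_pdf_far_le.
apply: (@le_trans _ _ (\int[lebesgue_measure]_(x in setT)
                          (c%:E * (normal_pdf th (2 * s) x)%:E))%E).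
  apply: ge0_subset_integral => //; first exact: measurable_far.
  by move=> x _; rewrite mule_ge0 // lee_fin mulr_ge0 ?expR_ge0.
rewrite ge0_integralZl_EFin ?mulr_ge0 ?expR_ge0 //; last exact: mpdf.
by rewrite integral_normal_pdf mule1.
Qed.

Lemma normal_prob_far_log_le th s r N : 0 < s -> 0 < r <= N ->
  (normal_prob th s [set y | (8 * s * Num.sqrt (ln (N / r)) < `|y - th|)%R] <=
    (2 * (r / N) ^+ 16)%:E)%E.
Proof.
move=> s_gt0 /andP[r_gt0 r_le]; have N_gt0 := lt_le_trans r_gt0 r_le.
have L_ge0 : 0 <= ln (N / r) by rewrite ln_ge0 // ler_pdivlMr // mul1r.
apply: le_trans (normal_prob_far_le _ s_gt0 _) _.
  by rewrite !mulr_ge0 ?sqrtr_ge0 // ltW.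
have -> : - ((8 * s * Num.sqrt (ln (N / r))) ^+ 2 / s ^+ 2) / 4 = 16%:R * - ln (N / r).
  by rewrite !exprMn sqr_sqrtr //; field; rewrite gt_eqF.
by rewrite expRM_natl expRN lnK ?posrE ?divr_gt0 // invf_div.
Qed.

End normal_tail.

Lemma measurable_card_ge d (T : measurableType d) n (Q : 'I_n -> T -> bool) m :
  (forall i, measurable [set w | Q i w]) ->
  measurable [set w | (m <= #|[set i | Q i w]%SET|)%N].
Proof.
move=> mQ.
rewrite [X in measurable X](_ : _ = \bigcup_(S in [set S : {set 'I_n} | (m <= #|S|)%N])
                                      \bigcap_(i in [set i | i \in S]) [set w | Q i w]).
  apply: fin_bigcup_measurable => [|S _]; first exact: finite_finset.
  by apply: fin_bigcap_measurable => [|i _]; [exact: finite_finset | exact: mQ].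
apply/seteqP; split => w /=.
- by move=> m_le; exists [set i | Q i w]%SET => //= i /=; rewrite inE.
- move=> [S /= m_le Sw]; apply: leq_trans m_le (subset_leq_card _).
  by apply/fintype.subsetP => i iS; rewrite inE; exact: Sw.
Qed.

Section finite_bounds.
Local Open Scope ereal_scope.

Lemma measure_big_setU_le {d} {T : measurableType d} {R : realType}
    (mu : {measure set T -> \bar R}) {I : Type} (r : seq I) (p : pred I) (F : I -> set T) :
  (forall i, measurable (F i)) ->
  mu (\big[setU/set0]_(i <- r | p i) F i) <= \sum_(i <- r | p i) mu (F i).
Proof.
move=> mF; elim: r => [|i r IH]; first by rewrite !big_nil measure0.
rewrite !big_cons; case: (p i) => //.
by apply: le_trans (measureU2 _ _ _) _ => //; [exact: bigsetU_measurable | exact: leeD].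
Qed.

Lemma lee_prod (R : realDomainType) (I : Type) (r : seq I) (p : pred I) (f g : I -> \bar R) :
  (forall i, p i -> 0 <= f i <= g i) ->
  \prod_(i <- r | p i) f i <= \prod_(i <- r | p i) g i.
Proof.
move=> fg; suff /andP[] : 0 <= \prod_(i <- r | p i) f i <= \prod_(i <- r | p i) g i by [].
elim/big_rec2: _ => [|i y1 y2 pi /andP [y1_ge0 y12]]; first by rewrite lee01 lexx.
have /andP [fi_ge0 fig] := fg i pi.
by rewrite mule_ge0 //= lee_pmul.
Qed.

End finite_bounds.

Section independent_hits.
Variables (d : measure_display) (T : measurableType d) (R : realType).
Variables (P : probability T R) (n : nat) (X : 'I_n -> {RV P >-> R}).
Hypothesis X_indep : mutually_independent X.
Variables (B : set R) (p : R).
Hypothesis mB : measurable B.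

Lemma measurable_card_hits (I : {set 'I_n}) m :
  measurable [set w | (m <= #|[set i in I | X i w \in B]%SET|)%N].
Proof.
apply: measurable_card_ge => i; case: (i \in I) => /=.
  rewrite [X in measurable X](_ : _ = X i @^-1` B); first exact: measurable_funPTI.
  by apply/seteqP; split=> w /=; rewrite in_setE.
by rewrite [X in measurable X](_ : _ = set0); [exact: measurable0 | apply/seteqP; split].
Qed.

Lemma prob_all_hits_le (S : {set 'I_n}) :
  (forall i, i \in S -> P (X i @^-1` B) <= p%:E)%E ->
  (P [set w | forall i, i \in S -> B (X i w)] <= (p ^+ #|S|)%:E)%E.
Proof.
move=> hit_le; set BS := fun i => if i \in S then B else setT.
rewrite (_ : [set w | _] = [set w | forall i, BS i (X i w)]); last first.
  apply/seteqP; split=> w /= hw i.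
  - by rewrite /BS; case: ifP => // iS; exact: hw.
  - by move=> iS; have := hw i; rewrite /BS iS.
rewrite X_indep => [|i]; last by rewrite /BS; case: ifP.
apply: le_trans (@lee_prod _ _ _ _ _ (fun i => (if i \in S then p else 1)%:E) _) _.
  move=> i _; rewrite measure_ge0 /BS; case: ifP => iS /=; first exact: hit_le.
  by rewrite preimage_setT probability_setT.
by rewrite prodEFin lee_fin -big_mkcond /= prodr_const.
Qed.

Lemma prob_card_hits_le (I : {set 'I_n}) m :
  (forall i, i \in I -> P (X i @^-1` B) <= p%:E)%E ->
  (P [set w | (m <= #|[set i in I | X i w \in B]%SET|)%N] <= ('C(#|I|, m)%:R * p ^+ m)%:E)%E.
Proof.
move=> hit_le.
set FS := [set S : {set 'I_n} | (S \subset I) && (#|S| == m)]%SET.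
set hits := fun S : {set 'I_n} => [set w | forall i, i \in S -> B (X i w)].
have mhits S : measurable (hits S).
  rewrite /hits [X in measurable X](_ : _ = \bigcap_(i in [set i | i \in S]) (X i @^-1` B)).
    by apply: fin_bigcap_measurable => [|i _]; [exact: finite_finset | exact: measurable_funPTI].
  by apply/seteqP; split=> w.
have hits_cover : [set w | (m <= #|[set i in I | X i w \in B]%SET|)%N] `<=`
                  \big[setU/set0]_(S in FS) hits S.
  move=> w /card_geqP [s [s_uniq s_size s_sub]].
  have sFS : [set i in s]%SET \in FS.
    rewrite inE cardsE (card_uniqP s_uniq) s_size eqxx andbT.
    by apply/fintype.subsetP => i; rewrite inE => /s_sub; rewrite inE => /andP[].
  rewrite (bigD1 _ sFS) /=; left => i; rewrite inE => /s_sub.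
  by rewrite inE => /andP[_ /set_mem].
apply: le_trans (le_measure _ _ _ hits_cover) _.
- by rewrite inE; exact: measurable_card_hits.
- by rewrite inE; apply: bigsetU_measurable => S _.
apply: le_trans (measure_big_setU_le P _ _ mhits) _.
apply: (@le_trans _ _ (\sum_(S in FS) (p ^+ m)%:E)%E).
  apply: lee_sum => S; rewrite inE => /andP[/fintype.subsetP SI /eqP <-].
  by apply: prob_all_hits_le => i iS; exact/hit_le/SI.
by rewrite sumEFin lee_fin sumr_const cards_draws mulr_natl.
Qed.

End independent_hits.

Section far_median.
Variables (d : measure_display) (T : measurableType d) (R : realType).
Variables (P : probability T R) (n : nat) (X : 'I_n -> {RV P >-> R}).
Variables (th c : R).

Lemma measurable_far_median : (0 < n)%N ->
  measurable [set w | exists m, is_median (fun i => X i w) m /\ c < `|m - th|].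
Proof.
move=> n_gt0.
rewrite [X in measurable X](_ : _ =
    [set w | (n - n %/ 2 <= #|[set i | (th + c < X i w)%R]%SET|)%N] `|`
    [set w | (n - n %/ 2 <= #|[set i | (X i w < th - c)%R]%SET|)%N]).
  apply: measurableU; apply: measurable_card_ge => i.
  - by rewrite [X in measurable X](_ : _ = X i @^-1` `]th + c, +oo[);
      [exact: measurable_funPTI | apply/seteqP; split=> w /=; rewrite in_itv /= andbT].
  - by rewrite [X in measurable X](_ : _ = X i @^-1` `]-oo, th - c[);
      [exact: measurable_funPTI | apply/seteqP; split=> w /=; rewrite in_itv].
by apply/seteqP; split=> w /(far_median_cardE _ _ _ n_gt0).
Qed.

Lemma prob_far_median_le (I : {set 'I_n}) k (q : R) :
  mutually_independent X -> (0 < n)%N -> (#|~: I| <= k)%N -> 0 <= q ->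
  (forall i, i \in I -> distribution P (X i) [set y | (c < `|y - th|)%R] <= q%:E)%E ->
  (P [set w | exists m, is_median (fun i => X i w) m /\ (c < `|m - th|)%R] <=
     ('C(n, n - n %/ 2 - k)%:R * q ^+ (n - n %/ 2 - k))%:E)%E.
Proof.
move=> X_indep n_gt0 out_le q_ge0 far_le.
have mfar := measurable_far th c.
apply: (@le_trans _ _ (P [set w | (n - n %/ 2 - k <=
    #|[set i in I | X i w \in [set y | (c < `|y - th|)%R]%classic]%SET|)%N])).
  apply: le_measure; rewrite ?inE.
  - exact: measurable_far_median.
  - exact: measurable_card_hits.
  move=> w /(far_median_inliers_card n_gt0 out_le) /leq_trans; apply.
  by apply: subset_leq_card; apply/fintype.subsetP => i; rewrite !inE => /andP[-> /mem_set].
apply: le_trans (prob_card_hits_le X_indep mfar _ far_le) _.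
rewrite lee_fin ler_wpM2r ?exprn_ge0 // ler_nat leq_bin2l //.
by rewrite -[X in (_ <= X)%N]card_ord max_card.
Qed.

End far_median.

Theorem mainTheorem19 (R : realType) :
  exists C : R, 0 < C /\
  forall delta : R, 0 < delta < 1 ->
  exists N : nat, forall n k : nat, (N <= n)%N ->
    (n <= 5 * k)%N -> (2 * k < n)%N ->
  forall (d : measure_display) (T : measurableType d) (P : probability T R)
         (X : 'I_n -> {RV P >-> R})
         (theta : R) (eta : 'I_n -> R) (sigma : R) (I : {set 'I_n}),
    0 < sigma ->
    (#|~: I| <= k)%N ->
    mutually_independent X ->
    (forall i, i \in I -> forall B, measurable B ->
        distribution P (X i) B = normal_prob theta sigma B) ->
    (forall i, i \notin I -> forall B, measurable B ->
        distribution P (X i) B = \d_(eta i) B) ->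
    (P [set w | exists m, is_median (fun i => X i w) m /\
          (C * sigma * Num.sqrt (ln (expR 1 * n%:R / (n%:R - 2 * k%:R)))
            < `|m - theta|)%R ] <= delta%:E)%E.
Proof.
exists 8; split=> [|delta /andP[delta_gt0 _]]; first by rewrite ltr0n.
have [N0 small] := bin_tail_small_eventually delta_gt0.
exists N0 => n k N0_le _ k_lt d T P X th eta s I s_gt0 out_le X_indep inlier _.
have n_gt0 : (0 < n)%N by lia.
have e_ge2 := @expR1_ge2 R.
have r_eq : n%:R - 2 * k%:R = (n - 2 * k)%:R :> R by rewrite natrB ?natrM //; lia.
have r_gt0 : (0 : R) < (n - 2 * k)%:R by rewrite ltr0n subn_gt0.
have r_le : (n - 2 * k)%:R <= expR 1 * n%:R :> R.
  by rewrite (@le_trans _ _ n%:R) ?ler_nat ?leq_subr // ler_peMl ?ler0n //; lra.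
pose y : R := (n - 2 * k)%:R / (expR 1 * n%:R).
have y_ge0 : 0 <= y by rewrite divr_ge0 // ltW // (lt_le_trans r_gt0).
have eny : expR 1 * n%:R * y = (n - 2 * k)%:R.
  by rewrite mulrC divfK // gt_eqF // (lt_le_trans r_gt0).
apply: le_trans (prob_far_median_le X_indep n_gt0 out_le (q := 2 * y ^+ 16) _ _) _.
- by rewrite mulr_ge0 // exprn_ge0.
- move=> i iI; rewrite (inlier i iI) ?r_eq; last exact: measurable_far.
  by apply: normal_prob_far_log_le; rewrite // r_gt0.
rewrite lee_fin small ?eny ?ler_nat ?leq_subr //; first lia.
by rewrite -natrM ler_nat; lia.
Qed.
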